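(* Let $\mathbf q=(\mathbf r,\mathbf x)\in\mathbb Z_{\ge1}^n$ with support vector $\mathbf r=(r_1,\dots,r_d)$, $r_1<r_2<\cdots<r_d$, $d\ge 2$ (i.e. $\mathbf q$ has at least two distinct entries), and multiplicity vector $\mathbf x=(x_1,\dots,x_d)\in\mathbb Z_{\ge1}^d$. If $\Delta_{(1,\mathbf q)}$ is reflexive and has the integer decomposition property, then $$x_i\le \frac{r_{i+1}}{r_i}\qquad\text{for all } 1\le i\le d-1 .$$ Further, if there exists some $j<d$ with $r_j\nmid r_d$, then $$x_d\le \frac{r_j}{r_d \bmod r_j}.$$ Consequently, if there exists some $j<d$ with $r_j\nmid r_d$, then there are at most finitely many vectors $\mathbf q$ supported on $\mathbf r$ (i.e. finitely many multiplicity vectors $\mathbf x$) for which $\Delta_{(1,\mathbf q)}$ is reflexive and IDP.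
   Context: For $\mathbf q=(q_1,\dots,q_n)\in\mathbb Z_{\ge1}^n$ with $q_1\le\cdots\le q_n$, let $\Delta_{(1,\mathbf q)}=\mathrm{conv}\{e_1,\dots,e_n,-\sum_{i=1}^n q_ie_i\}\subset\mathbb R^n$, where $e_i$ are the standard basis vectors. A lattice polytope $P\subset\mathbb R^n$ has the integer decomposition property (IDP) if for every integer $m\ge1$, every point of $mP\cap\mathbb Z^n$ is a sum of $m$ points of $P\cap\mathbb Z^n$. A lattice polytope is reflexive if, after translation by an integer vector, the origin lies in its interior and its polar dual is also a lattice polytope; it is known that $\Delta_{(1,\mathbf q)}$ is reflexive if and only if $q_i$ divides $1+\sum_{j=1}^n q_j$ for every $i$. Given distinct positive integers $r_1,\dots,r_d$ and positive integers $x_1,\dots,x_d$, the notation $\mathbf q=(\mathbf r,\mathbf x)=(r_1^{x_1},\dots,r_d^{x_d})$ denotes the vector consisting of $x_1$ copies of $r_1$, then $x_2$ copies of $r_2$, ..., then $x_d$ copies of $r_d$; $\mathbf r$ is called the support vector and $\mathbf x$ the multiplicity vector of $\mathbf q$, and $\mathbf q$ is ''supported on $\mathbf r$''. *)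

(* Polytopes are handled through their rational points. *)
From mathcomp Require Import all_boot all_order all_algebra.
Set Implicit Arguments. Unset Strict Implicit. Unset Printing Implicit Defensive.
Import Order.TTheory GRing.Theory Num.Theory.
Local Open Scope ring_scope.

Notation vec n := 'rV[rat]_n.

Definition lattice_pt n (v : vec n) : Prop :=
  forall i : 'I_n, exists z : int, v 0 i = z%:~R.

Definition conv n (V : seq (vec n)) (p : vec n) : Prop :=
  exists lam : 'I_(size V) -> rat,
    (forall i, 0 <= lam i) /\ \sum_i lam i = 1 /\
    \sum_i lam i *: V`_i = p.

Definition lattice_polytope n (P : vec n -> Prop) : Prop :=
  exists W : seq (vec n), (forall w, w \in W -> lattice_pt w) /\
    forall y, P y <-> conv W y.

Definition dilate n (m : nat) (P : vec n -> Prop) (p : vec n) : Prop :=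
  exists y, P y /\ p = m%:R *: y.

Definition IDP n (P : vec n -> Prop) : Prop :=
  forall m : nat, (1 <= m)%N -> forall p, dilate m P p -> lattice_pt p ->
    exists f : 'I_m -> vec n, (forall i, P (f i) /\ lattice_pt (f i)) /\
      \sum_i f i = p.

Definition dotv n (x y : vec n) : rat := \sum_i x 0 i * y 0 i.

Definition interior_pt n (P : vec n -> Prop) (p : vec n) : Prop :=
  exists eps : rat, 0 < eps /\
    forall y : vec n, (forall i, `|y 0 i - p 0 i| < eps) -> P y.

Definition polar n (P : vec n -> Prop) (y : vec n) : Prop :=
  forall x, P x -> dotv x y >= -1.

Definition reflexive_polytope n (P : vec n -> Prop) : Prop :=
  lattice_polytope P /\
  exists t : vec n, lattice_pt t /\
    let Q := fun x => P (x + t) in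
    interior_pt Q 0 /\ lattice_polytope (polar Q).

(* Delta_(1,q) = conv{e_1,...,e_n, - sum q_i e_i} *)
Definition Delta_verts (q : seq nat) : seq (vec (size q)) :=
  rcons [seq delta_mx 0 i | i <- enum 'I_(size q)]
        (- \sum_(i < size q) (nth 0%N q i)%:R *: delta_mx 0 i).

Definition Delta (q : seq nat) : vec (size q) -> Prop := conv (Delta_verts q).

(* q = (r, x) = (r_1^{x_1}, ..., r_d^{x_d}) *)
Definition qvec (r x : seq nat) : seq nat :=
  flatten [seq nseq p.2 p.1 | p <- zip r x].

Arguments Delta_verts : clear implicits.
Arguments Delta : clear implicits.

From mathcomp Require Import all_boot all_order all_algebra.
From mathcomp Require Import zify ring lra.
Set Implicit Arguments. Unset Strict Implicit. Unset Printing Implicit Defensive.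
Import Order.TTheory GRing.Theory Num.Theory.
Local Open Scope ring_scope.

(* Write N = 1 + sum_i q_i. A point z lies in Delta_(1,q) iff for some apex
   weight l >= 0 we have z_j + l q_j >= 0 and sum_j z_j = 1 - l N (DeltaP).
   1. Reflexivity. A vertex of a lattice polytope is a lattice point
      (vertex_lattice_pt). Applied to polar vertices this shows first that the
      interior lattice point of a reflexive Delta_(1,q) is 0, and then that
      every weight q_k divides N (reflexive_dvd).
   2. IDP. If R = q_k divides N and M = sum_i (q_i mod R) >= R, then with
      m R = 1 + M (so m >= 2) the lattice point p = -(floor(q_i / R))_i lies
      in m Delta but is not a sum of m lattice points of Delta: one summand
      must carry all the apex weight 1/R, forcing the others to be 0
      (idp_mod_sum_lt). Hence sum_i (q_i mod R) < R for every weight R.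
   3. Taking R = r_(i+1), resp. R = r_j with r_j not dividing r_d, and keeping
      only the block of x_i copies of r_i, resp. of r_d, in that sum gives
      x_i r_i < r_(i+1) and x_d (r_d mod r_j) < r_j. These bound every x_i
      by sum_i r_i, whence finiteness. *)

Lemma coord_sum_delta n (l : 'I_n -> rat) j :
  (\sum_i l i *: (delta_mx 0 i : vec n)) 0 j = l j.
Proof.
have -> : \sum_i l i *: (delta_mx 0 i : vec n) = \sum_i (\row_k l k) 0 i *: delta_mx 0 i.
  by apply: eq_bigr => i _; rewrite mxE.
by rewrite -row_sum_delta mxE.
Qed.

Lemma sum_delta n (k : 'I_n) : \sum_j (delta_mx 0 k : vec n) 0 j = 1.
Proof.
rewrite (bigD1 k) //= big1 ?addr0 ?mxE ?eqxx // => j /negbTE jk.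
by rewrite mxE jk andbF.
Qed.

Lemma dotv_delta n (k : 'I_n) (w : vec n) : dotv (delta_mx 0 k) w = w 0 k.
Proof.
rewrite /dotv (bigD1 k) //= big1 ?addr0 ?mxE ?eqxx ?mul1r // => j /negbTE jk.
by rewrite mxE jk andbF mul0r.
Qed.

Lemma dotvBl n (a b w : vec n) : dotv (a - b) w = dotv a w - dotv b w.
Proof. by rewrite /dotv -sumrB; apply: eq_bigr => i _; rewrite !mxE mulrBl. Qed.

Lemma dotv_combination n (u : vec n) m (F : 'I_m -> vec n) (c : 'I_m -> rat) :
  dotv u (\sum_k c k *: F k) = \sum_k c k * dotv u (F k).
Proof.
rewrite /dotv; under eq_bigr do rewrite summxE mulr_sumr.
rewrite exchange_big /=; apply: eq_bigr => k _; rewrite mulr_sumr.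
by apply: eq_bigr => i _; rewrite mxE; ring.
Qed.

Lemma lattice_pt_numq n (v : vec n) : lattice_pt v -> forall i, v 0 i = (numq (v 0 i))%:~R.
Proof. by move=> h i; case: (h i) => z ->; rewrite numq_int. Qed.

Lemma lattice_pt_sum n (t : vec n) : lattice_pt t ->
  \sum_i t 0 i = (\sum_i numq (t 0 i))%:~R.
Proof.
by move=> h; rewrite rmorph_sum /=; apply: eq_bigr => i _; exact: lattice_pt_numq.
Qed.

(* A point of a lattice polytope that is cut out by tight valid inequalities
   <u, .> >= -1 (u in U), i.e. a vertex, is a lattice point: writing it as a
   convex combination of the generators, every generator with positive weight
   satisfies all these inequalities with equality, hence is the point itself. *)
Lemma vertex_lattice_pt n (P : vec n -> Prop) (U : vec n -> Prop) y :
  lattice_polytope P -> P y ->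
  (forall w, P w -> forall u, U u -> -1 <= dotv u w) ->
  (forall u, U u -> dotv u y = -1) ->
  (forall w, P w -> (forall u, U u -> dotv u w = -1) -> w = y) -> lattice_pt y.
Proof.
move=> [W [latW HP]] Py valid tight unique.
have WinP (i : 'I_(size W)) : P W`_i.
  apply/HP; exists (fun k => (k == i)%:R); split; first by move=> k; case: (k == i).
  split; first by rewrite (bigD1 i) //= eqxx big1 ?addr0 // => k /negbTE ->.
  by rewrite (bigD1 i) //= eqxx scale1r big1 ?addr0 // => k /negbTE ->; rewrite scale0r.
have [lam [lam_ge0 [lam_sum lam_y]]] := proj1 (HP y) Py.
have [i lam_i_gt0] : exists i, 0 < lam i.
  apply/existsP; apply: contraT; rewrite negb_exists => /forallP lam_le0.
  have : \sum_i lam i = 0.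
    by apply: big1 => i _; apply/eqP; rewrite eq_le lam_ge0 andbT leNgt lam_le0.
  by rewrite lam_sum => /eqP; rewrite oner_eq0.
suff -> : y = W`_i by apply: latW; exact: mem_nth.
symmetry; apply: unique => // u Uu.
have slack_ge0 k : 0 <= lam k * (dotv u W`_k + 1).
  by rewrite mulr_ge0 //; have := valid _ (WinP k) u Uu; lra.
have slack0 : \sum_k lam k * (dotv u W`_k + 1) = 0.
  under eq_bigr do rewrite mulrDr mulr1.
  by rewrite big_split /= -dotv_combination lam_y tight // lam_sum addNr.
have /eqP := psumr_eq0P (fun k _ => slack_ge0 k) slack0 (i := i) isT.
by rewrite mulf_eq0 gt_eqF //= addr_eq0 => /eqP.
Qed.

Definition qcoef (q : seq nat) (i : 'I_(size q)) : rat := (nth 0%N q i)%:R.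
Definition qN (q : seq nat) : rat := 1 + \sum_(i < size q) qcoef i.

Definition apex q : vec (size q) := - \sum_i qcoef i *: delta_mx 0 i.

Lemma apex_coord q j : apex q 0 j = - qcoef j.
Proof. by rewrite /apex mxE coord_sum_delta. Qed.

Lemma qN_nat q : qN q = (1 + sumn q)%:R.
Proof.
rewrite /qN natrD sumnE (big_nth 0%N) big_mkord natr_sum.
by congr (_ + _); apply: eq_bigr.
Qed.

Lemma qcoef_ge0 q j : 0 <= qcoef (q := q) j.
Proof. by rewrite /qcoef ler0n. Qed.

Lemma qN_split q (k : 'I_(size q)) : qN q = 1 + qcoef k + \sum_(j | j != k) qcoef j.
Proof. by rewrite /qN (bigD1 k) //= addrA. Qed.

Lemma qcoef_lt_qN q (k : 'I_(size q)) : qcoef k < qN q.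
Proof.
have : 0 <= \sum_(j | j != k) qcoef (q := q) j by apply: sumr_ge0 => i _; apply: qcoef_ge0.
by rewrite (qN_split k); lra.
Qed.

Lemma qN_gt0 q : 0 < qN q.
Proof.
have : 0 <= \sum_(i < size q) qcoef i by apply: sumr_ge0 => i _; apply: qcoef_ge0.
by rewrite /qN; lra.
Qed.

Lemma size_Delta_verts q : size (Delta_verts q) = (size q).+1.
Proof. by rewrite size_rcons size_map size_enum_ord. Qed.

Lemma Delta_verts_combination q (l : 'I_(size q).+1 -> rat) :
  \sum_i l i *: (Delta_verts q)`_i
  = \row_j (l (widen_ord (leqnSn _) j) - l ord_max * qcoef j).
Proof.
have vert_e (i : 'I_(size q)) : (Delta_verts q)`_i = delta_mx 0 i.
  rewrite /Delta_verts nth_rcons size_map size_enum_ord ltn_ord.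
  by rewrite (nth_map i) ?size_enum_ord // nth_ord_enum.
have vert_apex : (Delta_verts q)`_(size q) = apex q.
  by rewrite /Delta_verts nth_rcons size_map size_enum_ord ltnn eqxx.
rewrite big_ord_recr /= vert_apex; apply/rowP => j.
under eq_bigr do rewrite vert_e.
by rewrite !mxE !coord_sum_delta mulrN.
Qed.

Lemma widen_lift_max n (i : 'I_n) : widen_ord (leqnSn n) i = lift ord_max i.
Proof. by apply: val_inj; rewrite /= /bump leqNgt ltn_ord. Qed.

Lemma DeltaP q (z : vec (size q)) : Delta q z <->
  exists l0 : rat, 0 <= l0 /\ (forall j, 0 <= z 0 j + l0 * qcoef j) /\
     \sum_j z 0 j = 1 - l0 * qN q.
Proof.
rewrite /Delta /conv size_Delta_verts; split.
- move=> [l [l_ge0 [l_sum <-]]]; exists (l ord_max); rewrite Delta_verts_combination.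
  split=> //; split=> [j|]; first by rewrite mxE subrK.
  under eq_bigr do rewrite mxE.
  rewrite sumrB -mulr_sumr; move: l_sum; rewrite big_ord_recr /= /qN.
  by set Sl := \sum_(i < size q) l _; set Sq := \sum_(i < size q) qcoef _; lra.
- move=> [l0 [l0_ge0 [z_ge z_sum]]].
  pose l i := oapp (fun j => z 0 j + l0 * qcoef j) l0 (unlift ord_max i).
  have l_widen j : l (widen_ord (leqnSn _) j) = z 0 j + l0 * qcoef j.
    by rewrite /l widen_lift_max liftK.
  have l_max : l ord_max = l0 by rewrite /l unlift_none.
  exists l; split; first by move=> i; rewrite /l; case: (unlift _ _).
  split.
    rewrite big_ord_recr /= l_max; under eq_bigr do rewrite l_widen.
    rewrite big_split /= -mulr_sumr z_sum /qN.
    by set Sq := \sum_(i < size q) qcoef _; lra.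
  by rewrite Delta_verts_combination; apply/rowP => j; rewrite mxE l_widen l_max addrK.
Qed.

Lemma Delta_delta q k : Delta q (delta_mx 0 k).
Proof.
apply/DeltaP; exists 0; split=> //; split; last by rewrite sum_delta mul0r subr0.
by move=> j; rewrite mul0r addr0 mxE ler0n.
Qed.

Lemma Delta_apex q : Delta q (apex q).
Proof.
apply/DeltaP; exists 1; split=> //; split; first by move=> j; rewrite apex_coord mul1r addNr.
by under eq_bigr do rewrite apex_coord; rewrite sumrN /qN; ring.
Qed.

Lemma dotv_apex q (w : vec (size q)) : dotv (apex q) w = - \sum_j qcoef j * w 0 j.
Proof. by rewrite /dotv -sumrN; apply: eq_bigr => j _; rewrite apex_coord mulNr. Qed.

Definition apex_weight q (z : vec (size q)) : rat := (1 - \sum_j z 0 j) / qN q.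

Lemma apex_weightP q (z : vec (size q)) : Delta q z ->
  0 <= apex_weight z /\ forall j, 0 <= z 0 j + apex_weight z * qcoef j.
Proof.
move=> /DeltaP [l0 [l0_ge0 [z_ge z_sum]]].
suff -> : apex_weight z = l0 by [].
by rewrite /apex_weight z_sum; field; rewrite gt_eqF // qN_gt0.
Qed.

Section ReflexiveTranslation.
Variables (q : seq nat) (t : vec (size q)).
Hypotheses (q_nonempty : (0 < size q)%N) (t_lattice : lattice_pt t)
  (t_interior : interior_pt (fun x => Delta q (x + t)) 0)
  (t_polar : lattice_polytope (polar (fun x => Delta q (x + t)))).

Local Notation tsum := (\sum_i numq (t 0 i)).

Let tsumE : \sum_i t 0 i = tsum%:~R.
Proof. exact: lattice_pt_sum. Qed.

(* Moving from t in the direction (1, ..., 1) stays in Delta, whose points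
   have coordinate sum at most 1; so the integer sum of t is at most 0. *)
Lemma translation_sum_le0 : (tsum <= 0)%R.
Proof.
have [eps [eps_gt0 near_t]] := t_interior.
have /DeltaP [l0 [l0_ge0 [_ sum_pt]]] : Delta q (const_mx (eps / 2) + t).
  by apply: near_t => i; rewrite !mxE subr0 ger0_norm; lra.
have : \sum_j (const_mx (eps / 2) + t) 0 j = eps / 2 *+ size q + tsum%:~R.
  rewrite -tsumE (eq_bigr (fun i => eps / 2 + t 0 i)); last by move=> i _; rewrite !mxE.
  by rewrite big_split /= sumr_const card_ord.
have : 0 < eps / 2 *+ size q by rewrite mulrn_wgt0 //; lra.
have : 0 <= l0 * qN q by rewrite mulr_ge0 // ltW // qN_gt0.
rewrite sum_pt => ? ? ?; have : tsum%:~R < 1 :> rat by lra.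
by rewrite -[1 : rat]/(1%:~R) ltr_int; lia.
Qed.

Let s := 1 - \sum_i t 0 i.

Let s_ge1 : 1 <= s.
Proof.
have : tsum%:~R <= 0 :> rat by rewrite -[0 : rat]/(0%:~R) ler_int translation_sum_le0.
by rewrite /s tsumE; lra.
Qed.

(* The facets of Delta - t through the translated vertices e_j - t meet in the
   point (-1/s, ..., -1/s) of the polar, which must therefore be a lattice
   point. *)
Lemma polar_diagonal_vertex : lattice_pt (const_mx (- s^-1) : vec (size q)).
Proof.
have s_gt0 : 0 < s by have := s_ge1; lra.
have dot_diag x : dotv x (const_mx (- s^-1)) = - (\sum_i x 0 i) / s.
  by rewrite /dotv -sumrN mulr_suml; apply: eq_bigr => i _; rewrite mxE; ring.
apply: (vertex_lattice_pt (U := fun u => exists j, u = delta_mx 0 j - t) t_polar).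
- move=> x /DeltaP [l0 [l0_ge0 [_ sum_x]]]; rewrite dot_diag ler_pdivlMr //.
  have : \sum_j (x + t) 0 j = \sum_j x 0 j + \sum_j t 0 j.
    by rewrite -big_split; apply: eq_bigr => i _; rewrite mxE.
  have : 0 <= l0 * qN q by rewrite mulr_ge0 // ltW // qN_gt0.
  by rewrite sum_x /s; lra.
- by move=> w pol_w u [j ->]; apply: pol_w; rewrite subrK; exact: Delta_delta.
- move=> u [j ->]; rewrite dot_diag.
  have -> : \sum_i (delta_mx 0 j - t) 0 i = s.
    by rewrite /s -(sum_delta j) -sumrB; apply: eq_bigr => i _; rewrite !mxE.
  by rewrite mulNr divff ?gt_eqF.
- move=> w _ tight_w.
  pose a := dotv t w.
  have w_const j : w 0 j = a - 1.
    by have := tight_w _ (ex_intro _ j erefl); rewrite dotvBl dotv_delta /a; lra.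
  have a_eq : a = (a - 1) * (1 - s).
    rewrite {1}/a /dotv /s; under eq_bigr do rewrite w_const.
    by rewrite mulrBr mulr1 -mulr_suml mulrC; ring.
  have a1_eq : a - 1 = - s^-1.
    apply: (mulIf (x := s)); first by rewrite gt_eqF.
    by rewrite mulNr mulVf ?gt_eqF // mulrC; lra.
  by apply/rowP => j; rewrite w_const a1_eq mxE.
Qed.

(* -1/s is an integer with s >= 1 an integer, so s = 1. *)
Lemma translation_sum_eq0 : tsum = 0.
Proof.
have k : 'I_(size q) by exists 0%N.
have := lattice_pt_numq polar_diagonal_vertex k; rewrite mxE.
set w := numq _ => w_eq.
have : s * (- s^-1) = -1 by rewrite mulrN divff // gt_eqF //; have := s_ge1; lra.
rewrite w_eq /s tsumE -[1 : rat]/(1%:~R) -intrB -intrM -[-1 : rat]/((-1)%:~R).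
have := translation_sum_le0.
by move=> ? /intr_inj; case: (lerP 0 w) => ?; nia.
Qed.

(* Moving from t in the direction -e_j stays in Delta; as the coordinate sum
   of t is 0 this forces t_j > -1, i.e. t_j >= 0. *)
Lemma translation_coord_ge0 j : (0 <= numq (t 0 j))%R.
Proof.
have [eps [eps_gt0 near_t]] := t_interior.
have /DeltaP [l0 [l0_ge0 [pt_ge sum_pt]]] : Delta q (- (eps / 2) *: delta_mx 0 j + t).
  apply: near_t => i; rewrite !mxE subr0.
  by case: (_ && _) => /=; rewrite ?mulr1n ?mulr0n ?mulr1 ?mulr0 ?normr0 ?normrN ?ger0_norm; lra.
have : \sum_i (- (eps / 2) *: delta_mx 0 j + t) 0 i = - (eps / 2).
  rewrite (eq_bigr (fun i => - (eps / 2) * (delta_mx 0 j : vec _) 0 i + t 0 i));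
    last by move=> i _; rewrite !mxE.
  by rewrite big_split /= -mulr_sumr sum_delta mulr1 tsumE translation_sum_eq0 addr0.
rewrite sum_pt => sum_eq.
have l0_gt0 : 0 < l0.
  by rewrite lt_def l0_ge0 andbT; apply/eqP => l00; rewrite l00 mul0r in sum_eq; lra.
have : l0 * qcoef j < l0 * qN q by rewrite ltr_pM2l // qcoef_lt_qN.
have := pt_ge j; rewrite !mxE !eqxx mulr1 => ? ?.
have : (-1)%:~R < t 0 j by lra.
by move=> t_gt; rewrite (lattice_pt_numq t_lattice j) ltr_int in t_gt; lia.
Qed.

(* t is a nonnegative integer vector of coordinate sum 0. *)
Lemma translation_eq0 : t = 0.
Proof.
apply/rowP => j; rewrite (lattice_pt_numq t_lattice) mxE.
by rewrite (psumr_eq0P (fun i _ => translation_coord_ge0 i) translation_sum_eq0 (i := j)).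
Qed.

End ReflexiveTranslation.

(* For a reflexive Delta_(1,q) every positive weight q_k divides N: the facets
   through the apex and the vertices e_i, i <> k, meet in the vertex y_k of
   the polar with y_k,i = -1 (i <> k) and y_k,k = (N - q_k) / q_k. *)
Section PolarVertex.
Variables (q : seq nat) (k : 'I_(size q)).
Hypotheses (qk_gt0 : (0 < nth 0%N q k)%N)
  (polar_lattice : lattice_polytope (polar (fun x => Delta q (x + 0)))).

Let qk_neq0 : qcoef k != 0.
Proof. by rewrite /qcoef pnatr_eq0 -lt0n. Qed.

Definition polar_vertex : vec (size q) :=
  \row_i (if i == k then (qN q - qcoef k) / qcoef k else -1).

Let dot_apex_vertex (w : vec (size q)) : (forall i, i != k -> w 0 i = -1) ->
  dotv (apex q) w = - (qcoef k * w 0 k) + \sum_(i | i != k) qcoef i.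
Proof.
move=> w_off; rewrite dotv_apex (bigD1 k) //= opprD; congr (_ + _).
by rewrite -sumrN; apply: eq_bigr => i ik; rewrite w_off // mulrN1 opprK.
Qed.

(* y_k is the only point of the polar tight at e_i (i <> k) and the apex. *)
Lemma polar_vertex_lattice : lattice_pt polar_vertex.
Proof.
have vertex_off i : i != k -> polar_vertex 0 i = -1 by move=> /negbTE ik; rewrite mxE ik.
apply: (vertex_lattice_pt
  (U := fun u => (exists2 i, i != k & u = delta_mx 0 i) \/ u = apex q) polar_lattice).
- move=> x; rewrite addr0 => /DeltaP [l0 [l0_ge0 [x_ge sum_x]]].
  rewrite /dotv (bigD1 k) //= mxE eqxx.
  rewrite (eq_bigr (fun i => - x 0 i)); last first.
    by move=> i ik; rewrite vertex_off // mulrN1.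
  rewrite sumrN; move: sum_x; rewrite (bigD1 k) //= => sum_x.
  have -> : x 0 k * ((qN q - qcoef k) / qcoef k)
      = qN q / qcoef k * (x 0 k + l0 * qcoef k) - l0 * qN q - x 0 k.
    by field.
  have : 0 <= qN q / qcoef k * (x 0 k + l0 * qcoef k).
    by rewrite mulr_ge0 // divr_ge0 // ltW // qN_gt0.
  lra.
- by move=> w pol_w u [[i _ ->] | ->]; apply: pol_w; rewrite addr0;
    [exact: Delta_delta | exact: Delta_apex].
- move=> u [[i ik ->] | ->]; first by rewrite dotv_delta vertex_off.
  rewrite dot_apex_vertex // mxE eqxx (qN_split k); field; exact: qk_neq0.
- move=> w _ tight_w.
  have w_off i : i != k -> w 0 i = -1.
    by move=> ik; rewrite -(dotv_delta i w); apply: tight_w; left; exists i.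
  have := tight_w _ (or_intror erefl); rewrite dot_apex_vertex // => w_k.
  apply/rowP => i; rewrite mxE; case: eqP => [->|/eqP ik]; last exact: w_off.
  by apply: (mulIf qk_neq0); rewrite mulfVK // (qN_split k); lra.
Qed.

(* The k-th entry of y_k is the integer N / q_k - 1. *)
Lemma polar_vertex_dvd : (nth 0%N q k %| 1 + sumn q)%N.
Proof.
have := lattice_pt_numq polar_vertex_lattice k; rewrite mxE eqxx.
set w := numq _ => w_eq.
have : qN q = qcoef k * (w + 1)%:~R by rewrite intrD -w_eq; field.
rewrite qN_nat /qcoef -[((1 + sumn q)%:R : rat)]/(((1 + sumn q)%N%:Z)%:~R).
rewrite -[((nth 0%N q k)%:R : rat)]/(((nth 0%N q k)%:Z)%:~R) -intrM => /intr_inj N_eq.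
have : ((nth 0%N q k)%:Z %| (1 + sumn q)%N%:Z)%Z by rewrite N_eq dvdz_mulr.
by rewrite dvdzE.
Qed.

End PolarVertex.

Lemma reflexive_dvd q (k : 'I_(size q)) : (0 < nth 0%N q k)%N ->
  reflexive_polytope (Delta q) -> (nth 0%N q k %| 1 + sumn q)%N.
Proof.
move=> qk_gt0 [_ [t [t_lattice [t_interior t_polar]]]].
have q_nonempty : (0 < size q)%N by apply: leq_ltn_trans (ltn_ord k).
have t0 := translation_eq0 q_nonempty t_lattice t_interior t_polar.
by rewrite t0 in t_polar; exact: polar_vertex_dvd.
Qed.

Lemma floor_lower_bound (F : int) (a R : nat) : (0 < R)%N ->
  (0 <= R%:Z * F + a%:Z)%R -> (- (a %/ R)%N%:Z <= F)%R.
Proof.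
move=> R_gt0 h.
have a_eq : (a%:Z = (a %/ R)%N%:Z * R%:Z + (a %% R)%N%:Z)%R.
  by rewrite {1}(divn_eq a R) PoszD PoszM.
have : ((a %% R)%N%:Z < R%:Z)%R by rewrite ltz_nat ltn_pmod.
have : (0 < R%:Z)%R by rewrite ltz_nat.
rewrite a_eq in h; nia.
Qed.

(* The IDP obstruction: let R = q_k > 0, K = sum_i floor(q_i / R) and
   M = sum_i (q_i mod R). If m R = 1 + M, the lattice point
   p = -(floor(q_i / R))_i lies in m Delta, but it is not a sum of m >= 2
   lattice points of Delta. *)
Section FloorPoint.
Variables (q : seq nat) (k : 'I_(size q)).
Local Notation R := (nth 0%N q k).
Hypothesis R_gt0 : (0 < R)%N.

Definition floor_point : vec (size q) := \row_i - ((nth 0%N q i %/ R)%N%:R).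

Local Notation K := (\sum_(i < size q) (nth 0%N q i %/ R))%N.
Local Notation M := (\sum_(i < size q) (nth 0%N q i %% R))%N.

Lemma floor_point_lattice : lattice_pt floor_point.
Proof. by move=> i; exists (- ((nth 0%N q i %/ R)%N%:Z))%R; rewrite mxE intrN. Qed.

Lemma floor_point_sum : \sum_j floor_point 0 j = - K%:R.
Proof. by rewrite natr_sum -sumrN; apply: eq_bigr => i _; rewrite mxE. Qed.

Lemma floor_point_k : floor_point 0 k = -1.
Proof. by rewrite mxE divnn R_gt0. Qed.

Lemma sumn_floor_mod : sumn q = (R * K + M)%N.
Proof.
rewrite sumnE (big_nth 0%N) big_mkord big_distrr -big_split /=.
by apply: eq_bigr => i _; rewrite mulnC -divn_eq.
Qed.

Section Dilate.
Variable m : nat.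
Hypothesis mR_eq : (m * R = 1 + M)%N.

Lemma qN_floor : qN q = (m + K)%:R * R%:R.
Proof. by rewrite qN_nat sumn_floor_mod -natrM; congr _%:R; lia. Qed.

(* p / m lies in Delta, with apex weight 1 / (R m). *)
Lemma floor_point_dilate : dilate m (Delta q) floor_point.
Proof.
have R_pos : 0 < (R%:R : rat) by rewrite ltr0n.
have m_pos : 0 < (m%:R : rat) by rewrite ltr0n; case: m mR_eq.
exists ((m%:R)^-1 *: floor_point); split; last by rewrite scalerA divff ?scale1r // gt_eqF.
apply/DeltaP; exists ((R%:R * m%:R)^-1); split; first by rewrite invr_ge0 mulr_ge0 // ltW.
split.
  move=> j; rewrite !mxE /qcoef.
  have -> : ((nth 0%N q j)%:R : rat)
      = (nth 0%N q j %/ R)%N%:R * R%:R + (nth 0%N q j %% R)%N%:R.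
    by rewrite {1}(divn_eq (nth 0%N q j) R) natrD natrM.
  have -> : (m%:R)^-1 * - (nth 0%N q j %/ R)%N%:R + (R%:R * m%:R)^-1 *
      ((nth 0%N q j %/ R)%N%:R * R%:R + (nth 0%N q j %% R)%N%:R)
      = (nth 0%N q j %% R)%N%:R / (R%:R * m%:R) :> rat.
    by field; rewrite ?(gt_eqF m_pos) ?(gt_eqF R_pos).
  by rewrite divr_ge0 // ltW // mulr_gt0.
rewrite (eq_bigr (fun j => (m%:R)^-1 * floor_point 0 j)); last by move=> j _; rewrite mxE.
rewrite -mulr_sumr floor_point_sum qN_floor natrD.
by field; rewrite ?(gt_eqF m_pos) ?(gt_eqF R_pos).
Qed.

Variable f : 'I_m -> vec (size q).
Hypotheses (f_Delta : forall i, Delta q (f i)) (f_lattice : forall i, lattice_pt (f i))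
  (f_sum : \sum_i f i = floor_point).

Let f_coord j : \sum_i f i 0 j = floor_point 0 j.
Proof. by rewrite -f_sum summxE. Qed.

Lemma apex_weights_sum : \sum_i apex_weight (f i) = (R%:R)^-1.
Proof.
have R_pos : 0 < (R%:R : rat) by rewrite ltr0n.
have mK_pos : 0 < ((m + K)%:R : rat) by rewrite ltr0n addn_gt0; case: m mR_eq.
rewrite /apex_weight -mulr_suml sumrB sumr_const card_ord exchange_big /=.
under eq_bigr do rewrite f_coord.
rewrite floor_point_sum qN_floor natrD.
by field; rewrite -natrD (gt_eqF mK_pos) (gt_eqF R_pos).
Qed.

(* Since the k-th coordinates add up to -1, some summand has f_k <= -1. *)
Lemma heavy_summand : exists i0, f i0 0 k <= -1.
Proof.
have [i0 f_neg | f_nonneg] := pickP (fun i => f i 0 k < 0); last first.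
  have : 0 <= \sum_i f i 0 k.
    by apply: sumr_ge0 => i _; have := f_nonneg i; rewrite /= ltNge => /negbFE.
  by rewrite f_coord floor_point_k; lra.
exists i0; move: f_neg; rewrite (lattice_pt_numq (f_lattice i0)).
by rewrite -[0 : rat]/(0%:~R) -[-1 : rat]/((-1)%:~R) ltr_int ler_int; lia.
Qed.

Section HeavySummand.
Variable i0 : 'I_m.
Hypothesis i0_heavy : f i0 0 k <= -1.

Lemma heavy_weight : apex_weight (f i0) = (R%:R)^-1 /\
  forall i, i != i0 -> apex_weight (f i) = 0.
Proof.
have R_pos : 0 < (R%:R : rat) by rewrite ltr0n.
have w_ge0 i := (apex_weightP (f_Delta i)).1.
have w0_ge : (R%:R)^-1 <= apex_weight (f i0).
  have := (apex_weightP (f_Delta i0)).2 k; rewrite /qcoef => h.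
  rewrite -[(R%:R)^-1]mul1r ler_pdivrMr //.
  by move: h i0_heavy; set w := apex_weight _; lra.
have rest0 : \sum_(i | i != i0) apex_weight (f i) = 0.
  have := apex_weights_sum; rewrite (bigD1 i0) //= => e.
  have : 0 <= \sum_(i | i != i0) apex_weight (f i) by apply: sumr_ge0.
  lra.
split; last by move=> i; apply: (psumr_eq0P (fun i _ => w_ge0 i) rest0).
by have := apex_weights_sum; rewrite (bigD1 i0) //= rest0 addr0.
Qed.

Lemma light_summand_ge0 i j : i != i0 -> 0 <= f i 0 j.
Proof.
by move=> ii0; have := (apex_weightP (f_Delta i)).2 j; rewrite (heavy_weight.2 i ii0) mul0r addr0.
Qed.

Lemma heavy_summand_ge j : floor_point 0 j <= f i0 0 j.
Proof.
have R_pos : 0 < (R%:R : rat) by rewrite ltr0n.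
have := (apex_weightP (f_Delta i0)).2 j; rewrite heavy_weight.1 /qcoef => h.
have : 0 <= R%:R * f i0 0 j + (nth 0%N q j)%:R :> rat.
  have -> : R%:R * f i0 0 j + (nth 0%N q j)%:R
      = R%:R * (f i0 0 j + (R%:R)^-1 * (nth 0%N q j)%:R) :> rat.
    by field; rewrite (gt_eqF R_pos).
  by rewrite mulr_ge0 // ltW.
rewrite (lattice_pt_numq (f_lattice i0)) mxE.
rewrite -[((nth 0%N q j)%:R : rat)]/(((nth 0%N q j)%:Z)%:~R) -[(R%:R : rat)]/((R%:Z)%:~R).
rewrite -intrM -intrD -[0 : rat]/(0%:~R) ler_int => /(floor_lower_bound R_gt0).
by rewrite -[((_ %/ _)%N%:R : rat)]/(((_ %/ _)%N%:Z)%:~R) -intrN ler_int.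
Qed.

End HeavySummand.

(* A second summand would be a nonnegative lattice vector of coordinate sum
   1 (its apex weight is 0) squeezed below 0 by the heavy summand. *)
Lemma floor_decomposition_short : (m <= 1)%N.
Proof.
have [i0 i0_heavy] := heavy_summand.
rewrite leqNgt; apply/negP => m_gt1.
pose i1 : 'I_m := if i0 == 0 :> nat then Ordinal m_gt1 else Ordinal (ltnW m_gt1).
have i1_neq : i1 != i0.
  apply/eqP => /(congr1 val); rewrite /i1.
  by case: eqVneq => [h|h] /= e; [rewrite h in e | rewrite -e eqxx in h].
have sum_i1 : \sum_j f i1 0 j = 1.
  move: (heavy_weight i0_heavy).2 => /(_ i1 i1_neq) /eqP.
  rewrite /apex_weight mulf_eq0 invr_eq0 (gt_eqF (qN_gt0 q)) orbF subr_eq0.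
  by move=> /eqP <-.
suff : \sum_j f i1 0 j <= 0 by rewrite sum_i1; lra.
apply: sumr_le0 => j _.
have := f_coord j; rewrite (bigD1 i0) //= (bigD1 i1 (P := fun i => i != i0)) //=.
have : 0 <= \sum_(i | (i != i0) && (i != i1)) f i 0 j.
  by apply: sumr_ge0 => i /andP [ii0 _]; exact: (light_summand_ge0 i0_heavy).
have := heavy_summand_ge i0_heavy j; lra.
Qed.

End Dilate.

Lemma idp_mod_sum_lt : (R %| 1 + sumn q)%N -> IDP (Delta q) -> (M < R)%N.
Proof.
move=> R_dvd idp; rewrite ltnNge; apply/negP => M_ge.
pose b := ((1 + sumn q) %/ R)%N.
have bR : (b * R = 1 + sumn q)%N by rewrite divnK.
have mR_eq : ((b - K) * R = 1 + M)%N by rewrite mulnBl; move: bR; rewrite sumn_floor_mod; nia.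
have m_gt1 : (1 < b - K)%N by nia.
have [f [f_ok f_sum]] := idp _ (ltnW m_gt1) _ (floor_point_dilate mR_eq) floor_point_lattice.
have := floor_decomposition_short mR_eq (fun i => (f_ok i).1) (fun i => (f_ok i).2) f_sum.
by rewrite leqNgt m_gt1.
Qed.

End FloorPoint.

Lemma reflexive_idp_mod_sum q R : all (fun a => 0 < a)%N q -> R \in q ->
  reflexive_polytope (Delta q) -> IDP (Delta q) ->
  (sumn [seq a %% R | a <- q] < R)%N.
Proof.
move=> q_pos Rq refl idp.
have k_lt : (index R q < size q)%N by rewrite index_mem.
pose k := Ordinal k_lt.
have qk : nth 0%N q k = R by rewrite /= nth_index.
have R_gt0 : (0 < R)%N by move/allP: q_pos => /(_ R Rq).
have -> : (sumn [seq a %% R | a <- q])%N = (\sum_(i < size q) (nth 0%N q i %% R))%N.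
  by rewrite sumnE big_map (big_nth 0%N) big_mkord.
rewrite -qk in R_gt0 *; apply: idp_mod_sum_lt => //.
exact: reflexive_dvd.
Qed.

Lemma mem_qvec r x a : a \in qvec r x -> a \in r.
Proof.
elim: r x => [|b r IH] [|c x] //=.
rewrite /qvec /= mem_cat => /orP [/nseqP [-> _] | a_in]; first exact: mem_head.
by rewrite inE (IH x a_in) orbT.
Qed.

Lemma nth_in_qvec r x i : size x = size r -> (i < size r)%N -> (0 < nth 0%N x i)%N ->
  nth 0%N r i \in qvec r x.
Proof.
elim: r x i => [|b r IH] [|c x] i //= [size_x] i_lt.
rewrite /qvec /= mem_cat; case: i i_lt => [_|i i_lt] /= x_pos.
  by rewrite mem_nseq x_pos eqxx.
by rewrite IH ?orbT.
Qed.

Lemma qvec_block_le r x i (g : nat -> nat) : size x = size r -> (i < size r)%N ->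
  (nth 0%N x i * g (nth 0%N r i) <= sumn [seq g a | a <- qvec r x])%N.
Proof.
elim: r x i => [|b r IH] [|c x] i //= [size_x] i_lt.
rewrite /qvec /= map_cat sumn_cat map_nseq sumn_nseq.
case: i i_lt => [_|i i_lt] /=; first by rewrite mulnC leq_addr.
exact: leq_trans (IH x i size_x i_lt) (leq_addl _ _).
Qed.

Lemma nth_le_sumn s i : (nth 0%N s i <= sumn s)%N.
Proof.
elim: s i => [|a s IH] [|i] //=; first exact: leq_addr.
exact: leq_trans (IH i) (leq_addl _ _).
Qed.

Section MultiplicityBounds.
Variables r x : seq nat.
Hypotheses (r_sorted : sorted ltn r) (r_pos : all (fun a => 0 < a)%N r)
  (x_size : size x = size r) (x_pos : all (fun m => 0 < m)%N x)
  (refl : reflexive_polytope (Delta (qvec r x))) (idp : IDP (Delta (qvec r x))).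

Let mod_sum_lt i : (i < size r)%N ->
  (sumn [seq a %% nth 0%N r i | a <- qvec r x] < nth 0%N r i)%N.
Proof.
move=> i_lt; apply: reflexive_idp_mod_sum => //.
  by apply/allP => a /mem_qvec a_in; exact: (allP r_pos).
by apply: nth_in_qvec => //; apply: (all_nthP 0%N x_pos); rewrite x_size.
Qed.

(* Reducing modulo r_(i+1), the block of r_i's alone contributes x_i r_i. *)
Lemma multiplicity_bound i : (i.+1 < size r)%N ->
  (nth 0%N x i * nth 0%N r i < nth 0%N r i.+1)%N.
Proof.
move=> i_lt; have r_lt : (nth 0%N r i < nth 0%N r i.+1)%N.
  by apply: (sorted_ltn_nth ltn_trans 0%N r_sorted) => //; rewrite inE ltnW.
have := qvec_block_le (fun a => a %% nth 0%N r i.+1)%N x_size (ltnW i_lt).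
by rewrite /= modn_small // => /leq_ltn_trans; apply; apply: mod_sum_lt.
Qed.

(* Reducing modulo r_j, the block of r_d's contributes x_d (r_d mod r_j). *)
Lemma multiplicity_bound_last j : (j < size r)%N ->
  (nth 0%N x (size r).-1 * (nth 0%N r (size r).-1 %% nth 0%N r j) < nth 0%N r j)%N.
Proof.
move=> j_lt; have last_lt : ((size r).-1 < size r)%N by rewrite prednK // (leq_ltn_trans _ j_lt).
have := qvec_block_le (fun a => a %% nth 0%N r j)%N x_size last_lt.
by move=> /leq_ltn_trans; apply; apply: mod_sum_lt.
Qed.

End MultiplicityBounds.

Fixpoint bounded_seqs (d B : nat) : seq (seq nat) :=
  if d is d'.+1 then [seq a :: s | a <- iota 0 B.+1, s <- bounded_seqs d' B] else [:: [::]].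

Lemma mem_bounded_seqs B x : (forall i, (i < size x)%N -> (nth 0%N x i <= B)%N) ->
  x \in bounded_seqs (size x) B.
Proof.
elim: x => [|a x IH] x_le; first exact: mem_head.
apply: (allpairs_f (fun a s => a :: s)); first by rewrite mem_iota add0n ltnS (x_le 0%N).
by apply: IH => i i_lt; apply: (x_le i.+1).
Qed.


Lemma natr_le_div_of_mul_lt (a b c : nat) : (0 < b)%N -> (a * b < c)%N ->
  a%:R <= c%:R / b%:R :> rat.
Proof. by move=> b_gt0 lt_c; rewrite ler_pdivlMr ?ltr0n // -natrM ler_nat ltnW. Qed.

Lemma le_of_mul_lt (a b c : nat) : (0 < b)%N -> (a * b < c)%N -> (a <= c)%N.
Proof. by move=> b_gt0 /ltnW; apply: leq_trans; rewrite leq_pmulr. Qed.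

Unset Implicit Arguments.

Theorem theorem3p3 (r : seq nat) :
  (2 <= size r)%N -> sorted ltn r -> all (fun a => 0 < a)%N r ->
  (forall x : seq nat, size x = size r -> all (fun m => 0 < m)%N x ->
     reflexive_polytope (Delta (qvec r x)) -> IDP (Delta (qvec r x)) ->
     (forall i : nat, (i.+1 < size r)%N ->
        (nth 0%N x i)%:R <= (nth 0%N r i.+1)%:R / (nth 0%N r i)%:R :> rat) /\
     (forall j : nat, (j < (size r).-1)%N ->
        ~~ (nth 0%N r j %| nth 0%N r (size r).-1)%N ->
        (nth 0%N x (size r).-1)%:R
          <= (nth 0%N r j)%:R / (nth 0%N r (size r).-1 %% nth 0%N r j)%:R :> rat))
  /\
  ((exists j : nat, (j < (size r).-1)%N /\
       ~~ (nth 0%N r j %| nth 0%N r (size r).-1)%N) ->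
   exists S : seq (seq nat), forall x : seq nat,
     size x = size r -> all (fun m => 0 < m)%N x ->
     reflexive_polytope (Delta (qvec r x)) -> IDP (Delta (qvec r x)) ->
     x \in S).
Proof.
move=> size_r r_sorted r_pos.
have r_gt0 i : (i < size r)%N -> (0 < nth 0%N r i)%N by apply/all_nthP.
have lt_last j : (j < (size r).-1)%N -> (j < size r)%N by move=> /leq_trans; apply; exact: leq_pred.
have mod_gt0 j : ~~ (nth 0%N r j %| nth 0%N r (size r).-1)%N ->
    (0 < nth 0%N r (size r).-1 %% nth 0%N r j)%N by rewrite lt0n.
split=> [x x_size x_pos refl idp | [j [j_lt r_ndvd]]].
  split=> [i i_lt | j j_lt r_ndvd]; apply: natr_le_div_of_mul_lt.
  - exact/r_gt0/ltnW.
  - exact: multiplicity_bound.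
  - exact: mod_gt0.
  - exact: multiplicity_bound_last (lt_last j j_lt).
exists (bounded_seqs (size r) (sumn r)) => x x_size x_pos refl idp.
rewrite -x_size; apply: mem_bounded_seqs => i; rewrite x_size => i_lt.
have [i_lt' | i_last] := ltnP i.+1 (size r).
  apply: leq_trans (nth_le_sumn r i.+1).
  exact: le_of_mul_lt (r_gt0 i i_lt) (multiplicity_bound r_sorted r_pos x_size x_pos refl idp i_lt').
have -> : i = (size r).-1 by lia.
apply: leq_trans (nth_le_sumn r j).
exact: le_of_mul_lt (mod_gt0 j r_ndvd) (multiplicity_bound_last r_pos x_size x_pos refl idp (lt_last j j_lt)).
Qed.
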